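(* The set $\mathscr Q=\mathbb Q\cap[0,1]$ is $R$-invariant, i.e. $R(\mathscr Q)\subset\mathscr Q$. The only periodic orbits of $R$ contained in $\mathscr Q$ are $C_0=\{0,2/3\}$ and $C_1=\{1,1/3\}$ (both of period $2$). Moreover $\mathscr Q=\mathscr Q_0\cup\mathscr Q_1$ is a disjoint union, where $\mathscr Q_i$ is the set of $x\in\mathscr Q$ whose forward $R$-orbit contains $C_i$, and both $\mathscr Q_0$ and $\mathscr Q_1$ are dense in $[0,1]$.
   Context: Define $\rho$ on binary words: for $b=b_1b_2\dots$, $\rho(b)$ is obtained by deleting every digit $b_n=0$ and replacing every $b_n=1$ by $0$ if $n$ is odd and by $1$ if $n$ is even. For $x\in(0,1]$ let $\beta(x)$ be the unique binary expansion of $x$ with infinitely many $1$'s. Define $R:[0,1]\to[0,1]$ by $R(0)=2/3$ and, for $x\in(0,1]$, $R(x)=\sum_{n\ge1}c_n2^{-n}$ where $c=\rho(\beta(x))$. *)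

From Stdlib Require Import Reals QArith ClassicalEpsilon ClassicalDescription.
From Coquelicot Require Import Coquelicot.
Open Scope R_scope.

(* Binary words are b : nat -> bool, with digits indexed from 1 (b 0 is ignored). *)

Fixpoint ones (b : nat -> bool) (n : nat) : nat :=
  match n with
  | O => O
  | S m => (ones b m + (if b (S m) then 1 else 0))%nat
  end.

(* rho(b): delete the 0 digits, replace the 1 at position n by 0 (n odd) or 1 (n even).
   If b has only finitely many 1's, the finite word rho(b) is padded with 0's, which
   does not change the value sum c_n 2^-n. *)
Definition rho (b : nat -> bool) (k : nat) : bool :=
  if excluded_middle_informative
       (exists p, (1 <= p)%nat /\ b p = true /\ Nat.even p = true /\ ones b p = k)
  then true else false.

Definition bin_val (b : nat -> bool) : R :=
  Series (fun n => if b (S n) then / 2 ^ (S n) else 0).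

Definition is_beta (x : R) (b : nat -> bool) : Prop :=
  (forall N, exists n, (N <= n)%nat /\ b n = true) /\
  is_series (fun n => if b (S n) then / 2 ^ (S n) else 0) x.

(* beta(x): the (unique for x in (0,1]) binary expansion with infinitely many 1's *)
Definition beta (x : R) : nat -> bool :=
  epsilon (inhabits (fun _ : nat => false)) (is_beta x).

Definition Rmap (x : R) : R :=
  if excluded_middle_informative (x = 0) then 2 / 3 else bin_val (rho (beta x)).

Definition Qset (x : R) : Prop := (exists q : Q, x = Q2R q) /\ 0 <= x <= 1.

Definition in_orbit (x y : R) : Prop := exists k : nat, Nat.iter k Rmap x = y.

Definition Qset0 (x : R) : Prop := Qset x /\ in_orbit x 0 /\ in_orbit x (2/3).
Definition Qset1 (x : R) : Prop := Qset x /\ in_orbit x 1 /\ in_orbit x (1/3).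

(* Everything is computed on binary words.  A word b with infinitely many 1's is the
   expansion beta (bin_val b), so R (bin_val b) = bin_val (rho b) (Rmap_bin_val); the cycles
   come from the words 111..., 0101..., 1010... and 000....
   - Invariance.  A rational in (0,1] has an eventually periodic expansion (doubling map and
     pigeonhole).  If a period of length P holds m ones, rho b is eventually periodic with
     period m (P even) or antiperiodic with antiperiod m (P odd), so it is rational again.
   - Every rational orbit reaches 0 or 1, by strong induction on m: for even P, rho b has
     period m and at most m ones per period, strictly fewer unless rho b is eventually 1;
     an odd P becomes even after one step.  Eventually constant words u 111... are handled
     by R^2, which acts on the prefix u by rho_list twice and shortens it.
   - Periodic orbits and disjointness follow because C_0 and C_1 are invariant.
   - Density.  R^2 maps the extensions of a prefix w onto all extensions of the shorter
     prefix rho_list (rho_list w) (Rmap2_prefix_preimage); by induction on the length every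
     prefix, hence every dyadic interval, extends into both basins. *)

From Stdlib Require Import Reals Qreals Lia Lra List.
From Stdlib Require Import FunctionalExtensionality Classical ClassicalEpsilon ClassicalDescription.
From Coquelicot Require Import Coquelicot.
Import ListNotations.
Open Scope R_scope.

(** * Binary words and their values *)

Definition digit_term (b : nat -> bool) (n : nat) : R := if b (S n) then / 2 ^ (S n) else 0.

Lemma digit_term_bound b n : 0 <= digit_term b n <= (/2) ^ n.
Proof.
  unfold digit_term. rewrite pow_inv.
  assert (H : 0 < 2 ^ n) by (apply pow_lt; lra).
  change (2 ^ S n) with (2 * 2 ^ n).
  destruct (b (S n)); split.
  - left; apply Rinv_0_lt_compat; lra.
  - apply Rinv_le_contravar; lra.
  - lra.
  - left; apply Rinv_0_lt_compat; lra.
Qed.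

Lemma is_series_geom_half : is_series (fun n => (/2) ^ n) 2.
Proof.
  pose proof (is_series_geom (/2) ltac:(rewrite Rabs_pos_eq; lra)) as H.
  replace (/ (1 - /2)) with 2 in H by field. exact H.
Qed.

Lemma ex_series_digit_term b : ex_series (digit_term b).
Proof.
  apply (@ex_series_le R_AbsRing R_CompleteNormedModule _ (fun n => (/2) ^ n));
    [| eexists; apply is_series_geom_half].
  intro n. change norm with Rabs. destruct (digit_term_bound b n).
  rewrite Rabs_pos_eq; lra.
Qed.

Lemma is_series_bin_val b : is_series (digit_term b) (bin_val b).
Proof. apply Series_correct, ex_series_digit_term. Qed.

Lemma bin_val_ext b b' : (forall n, (1 <= n)%nat -> b n = b' n) -> bin_val b = bin_val b'.
Proof.
  intro H. unfold bin_val. apply Series_ext. intro n. rewrite H by lia. reflexivity.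
Qed.

Definition shift (b : nat -> bool) : nat -> bool := fun n => b (S n).

Definition bit_val (c : bool) : R := if c then / 2 else 0.

Lemma bin_val_cons b : bin_val b = bit_val (b 1%nat) + bin_val (shift b) / 2.
Proof.
  unfold bin_val. rewrite Series_incr_1 by apply ex_series_digit_term. f_equal.
  - unfold bit_val. simpl. destruct (b 1%nat); lra.
  - unfold Rdiv. rewrite <- Series_scal_r. apply Series_ext. intro n. unfold shift.
    change (2 ^ S (S n)) with (2 * 2 ^ S n).
    assert (0 < 2 ^ S n) by (apply pow_lt; lra).
    destruct (b (S (S n))); [field; lra | lra].
Qed.

Lemma bin_val_nonneg b : 0 <= bin_val b.
Proof.
  change (0 <= Series (digit_term b)).
  apply Rle_trans with (Series (fun n => 0 * digit_term b n)); [rewrite Series_scal_l; lra |].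
  apply Series_le; [| apply ex_series_digit_term].
  intro n. destruct (digit_term_bound b n). split; lra.
Qed.

Lemma bin_val_le_1 b : bin_val b <= 1.
Proof.
  change (Series (digit_term b) <= 1).
  apply Rle_trans with (Series (fun n => (/2) ^ n * /2)).
  - apply Series_le; [| apply ex_series_scal_r; eexists; apply is_series_geom_half].
    intro n. destruct (digit_term_bound b n) as [H0 _]. split; [exact H0 |].
    unfold digit_term. destruct (b (S n)); [| apply Rmult_le_pos; [apply pow_le |]; lra].
    simpl. rewrite Rinv_mult, pow_inv. lra.
  - rewrite Series_scal_r. change (Series (fun n => (/2) ^ n) * /2 <= 1).
    rewrite (is_series_unique _ _ is_series_geom_half). lra.
Qed.

Definition inf_ones (b : nat -> bool) : Prop := forall N, exists n, (N <= n)%nat /\ b n = true.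

Lemma inf_ones_shift b : inf_ones b -> inf_ones (shift b).
Proof.
  intros H N. destruct (H (S N)) as [n [Hn Hb]].
  exists (pred n). unfold shift. replace (S (pred n)) with n by lia. split; [lia | exact Hb].
Qed.

(* A single 1 makes the value positive, so words with infinitely many 1's never
   represent 0, where [Rmap] is defined separately. *)
Lemma bin_val_pos_at b n : (1 <= n)%nat -> b n = true -> 0 < bin_val b.
Proof.
  revert b. induction n as [|n IH]; intros b Hn Hb; [lia |].
  rewrite bin_val_cons. unfold bit_val. destruct n as [|n].
  - rewrite Hb. pose proof (bin_val_nonneg (shift b)). lra.
  - assert (0 < bin_val (shift b)) by (apply IH; [lia | exact Hb]).
    destruct (b 1%nat); lra.
Qed.

Lemma bin_val_pos b : inf_ones b -> 0 < bin_val b.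
Proof. intro H. destruct (H 1%nat) as [n [Hn Hb]]. exact (bin_val_pos_at b n Hn Hb). Qed.

(* Expansions with infinitely many 1's are unique: a word whose first digit is 0 has
   value <= 1/2, with equality only for 0111..., and one starting with 1 has value > 1/2. *)
Lemma bin_val_inj b b' : inf_ones b -> inf_ones b' -> bin_val b = bin_val b' ->
  forall n, (1 <= n)%nat -> b n = b' n.
Proof.
  intros Hb Hb' HV n Hn. revert b b' Hb Hb' HV. induction n as [|n IH]; [lia |].
  intros b b' Hb Hb' HV. rewrite (bin_val_cons b), (bin_val_cons b') in HV.
  pose proof (bin_val_pos _ (inf_ones_shift _ Hb)). pose proof (bin_val_pos _ (inf_ones_shift _ Hb')).
  pose proof (bin_val_le_1 (shift b)). pose proof (bin_val_le_1 (shift b')).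
  assert (Hfirst : b 1%nat = b' 1%nat).
  { unfold bit_val in HV. destruct (b 1%nat), (b' 1%nat); auto; lra. }
  destruct n as [|n]; [exact Hfirst |].
  rewrite Hfirst in HV.
  apply (IH ltac:(lia) (shift b) (shift b')); try apply inf_ones_shift; auto. lra.
Qed.

Lemma beta_spec b : inf_ones b -> forall n, (1 <= n)%nat -> beta (bin_val b) n = b n.
Proof.
  intro Hb.
  assert (H : is_beta (bin_val b) b) by (split; [exact Hb | apply is_series_bin_val]).
  assert (H' : is_beta (bin_val b) (beta (bin_val b))) by (unfold beta; apply epsilon_spec; exists b; exact H).
  destruct H' as [Hinf Hval].
  apply bin_val_inj; auto. apply is_series_unique. exact Hval.
Qed.

(** * Counting 1's; the map rho on words *)

Definition bit_nat (c : bool) : nat := if c then 1%nat else 0%nat.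

Lemma ones_S b n : ones b (S n) = (ones b n + bit_nat (b (S n)))%nat.
Proof. reflexivity. Qed.

Lemma ones_ext b b' : (forall n, (1 <= n)%nat -> b n = b' n) -> forall n, ones b n = ones b' n.
Proof. intros H n. induction n as [|n IH]; simpl; auto. rewrite IH, H by lia. reflexivity. Qed.

Lemma ones_mono b n n' : (n <= n')%nat -> (ones b n <= ones b n')%nat.
Proof. intro H. induction H; auto. rewrite ones_S. lia. Qed.

Lemma ones_add_le b n j : (ones b (n + j) <= ones b n + j)%nat.
Proof.
  induction j; [rewrite Nat.add_0_r; lia |].
  rewrite Nat.add_succ_r, ones_S. unfold bit_nat; destruct (b _); lia.
Qed.

Lemma ones_lt b p p' : (ones b p < ones b p')%nat -> (p < p')%nat.
Proof.
  intro H. destruct (Nat.lt_ge_cases p p') as [| H']; auto.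
  apply (ones_mono b) in H'. lia.
Qed.

Lemma ones_at_one b p : (1 <= p)%nat -> b p = true -> ones b p = S (ones b (pred p)).
Proof. intros Hp Hb. destruct p; [lia |]. rewrite ones_S, Hb. simpl. lia. Qed.

Lemma kth_one_unique b p p' : (1 <= p)%nat -> (1 <= p')%nat -> b p = true -> b p' = true ->
  ones b p = ones b p' -> p = p'.
Proof.
  intros H1 H2 H3 H4 H5.
  destruct (Nat.lt_trichotomy p p') as [Hl | [Hl | Hl]]; auto.
  - pose proof (ones_at_one b p' H2 H4). pose proof (ones_mono b p (pred p') ltac:(lia)). lia.
  - pose proof (ones_at_one b p H1 H3). pose proof (ones_mono b p' (pred p) ltac:(lia)). lia.
Qed.

Lemma ones_unbounded b : inf_ones b -> forall K, exists M, (K <= ones b M)%nat.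
Proof.
  intros Hb K. induction K as [| K [M HM]]; [exists 0%nat; lia |].
  destruct (Hb (S M)) as [n [Hn Hbn]]. exists n.
  pose proof (ones_at_one b n ltac:(lia) Hbn). pose proof (ones_mono b M (pred n) ltac:(lia)). lia.
Qed.

Lemma kth_one_exists b k : inf_ones b -> (1 <= k)%nat ->
  exists p, (1 <= p)%nat /\ b p = true /\ ones b p = k.
Proof.
  intros Hb Hk. destruct (ones_unbounded b Hb k) as [M HM].
  induction M as [| M IH]; [simpl in HM; lia |].
  destruct (Compare_dec.le_lt_dec k (ones b M)) as [H | H]; auto.
  rewrite ones_S in HM. destruct (b (S M)) eqn:E; simpl in HM; [| lia].
  exists (S M). split; [lia |]. split; auto. rewrite ones_S, E. simpl. lia.
Qed.

Definition kth_one_parity (e : bool) (b : nat -> bool) (k : nat) : Prop :=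
  exists p, (1 <= p)%nat /\ b p = true /\ Nat.even p = e /\ ones b p = k.

Lemma rho_true_iff b k : rho b k = true <-> kth_one_parity true b k.
Proof.
  unfold rho, kth_one_parity.
  destruct (excluded_middle_informative _); split; intro; auto; discriminate.
Qed.

Lemma kth_one_parity_ext e b b' k : (forall n, (1 <= n)%nat -> b n = b' n) ->
  (kth_one_parity e b k <-> kth_one_parity e b' k).
Proof.
  intro H. unfold kth_one_parity.
  split; intros [p [H1 [H2 [H3 H4]]]]; exists p;
    rewrite (ones_ext _ _ H) in *; [rewrite <- H | rewrite H]; auto.
Qed.

Lemma rho_ext b b' : (forall n, (1 <= n)%nat -> b n = b' n) -> rho b = rho b'.
Proof.
  intro H. apply functional_extensionality. intro k. apply Bool.eq_iff_eq_true.
  rewrite !rho_true_iff. apply kth_one_parity_ext. exact H.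
Qed.

Lemma Rmap_bin_val b : inf_ones b -> Rmap (bin_val b) = bin_val (rho b).
Proof.
  intro Hb. unfold Rmap. destruct (excluded_middle_informative _) as [H | H].
  - pose proof (bin_val_pos _ Hb). lra.
  - rewrite (rho_ext (beta (bin_val b)) b); [reflexivity |]. apply beta_spec; auto.
Qed.

Lemma kth_one_parity_at e b p : (1 <= p)%nat -> b p = true ->
  (kth_one_parity e b (ones b p) <-> Nat.even p = e).
Proof.
  intros Hp Hb. split.
  - intros [p' [H1 [H2 [H3 H4]]]]. assert (p' = p) by (apply (kth_one_unique b); auto).
    subst; auto.
  - intro. exists p. auto.
Qed.

Lemma rho_false_iff b k : inf_ones b -> (1 <= k)%nat ->
  (kth_one_parity false b k <-> rho b k = false).
Proof.
  intros Hb Hk. destruct (kth_one_exists b k Hb Hk) as [p [H1 [H2 H3]]]. subst k.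
  rewrite <- Bool.not_true_iff_false, rho_true_iff, !kth_one_parity_at by auto.
  destruct (Nat.even p); split; congruence.
Qed.

Lemma rho_spec b w : (forall k, (1 <= k)%nat -> (kth_one_parity true b k <-> w k = true)) ->
  forall k, (1 <= k)%nat -> rho b k = w k.
Proof.
  intros H k Hk. apply Bool.eq_iff_eq_true. rewrite rho_true_iff. apply H, Hk.
Qed.

(** * The two 2-cycles C_0 = {0, 2/3} and C_1 = {1, 1/3} *)

Definition const_word (c : bool) : nat -> bool := fun _ => c.

Definition alt_word (e : bool) : nat -> bool := fun j => Bool.eqb (Nat.even j) e.

Lemma bin_val_const c : bin_val (const_word c) = if c then 1 else 0.
Proof.
  pose proof (bin_val_cons (const_word c)) as H. unfold bit_val in H.
  change (shift (const_word c)) with (const_word c) in H. destruct c; simpl in H; lra.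
Qed.

Lemma bin_val_shift_alt e : bin_val (shift (alt_word e)) = bin_val (alt_word (negb e)).
Proof.
  apply bin_val_ext. intros n _. unfold shift, alt_word.
  rewrite Nat.even_succ, <- Nat.negb_even. destruct (Nat.even n), e; reflexivity.
Qed.

(* 0101... = 1/3 and 1010... = 2/3, from [x = b_1/2 + y/2] and [y = (1-b_1)/2 + x/2]. *)
Lemma bin_val_alt e : bin_val (alt_word e) = if e then 1/3 else 2/3.
Proof.
  pose proof (bin_val_cons (alt_word e)) as H1. pose proof (bin_val_cons (alt_word (negb e))) as H2.
  rewrite bin_val_shift_alt in H1, H2. rewrite negb_involutive in H2.
  unfold bit_val in H1, H2. destruct e; simpl in H1, H2; lra.
Qed.

Lemma inf_ones_const : inf_ones (const_word true).
Proof. intro N. exists N. auto. Qed.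

Lemma inf_ones_alt e : inf_ones (alt_word e).
Proof.
  intro N. destruct (Bool.eqb (Nat.even N) e) eqn:E.
  - exists N. split; auto.
  - exists (S N). split; [lia |]. unfold alt_word. rewrite Nat.even_succ, <- Nat.negb_even.
    destruct (Nat.even N), e; simpl in *; auto.
Qed.

Lemma kth_one_parity_const e j : (1 <= j)%nat ->
  (kth_one_parity e (const_word true) j <-> alt_word e j = true).
Proof.
  intro Hj. assert (Hones : ones (const_word true) j = j).
  { clear Hj. induction j; simpl; auto. rewrite IHj. simpl. lia. }
  rewrite <- Hones at 1. rewrite kth_one_parity_at by auto. unfold alt_word.
  destruct (Nat.even j), e; simpl; split; intro; auto; discriminate.
Qed.

Lemma kth_one_parity_alt e e' j : (1 <= j)%nat -> (kth_one_parity e' (alt_word e) j <-> e = e').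
Proof.
  intro Hj. destruct (kth_one_exists (alt_word e) j (inf_ones_alt e) Hj) as [p [H1 [H2 H3]]].
  rewrite <- H3, kth_one_parity_at by auto. unfold alt_word in H2.
  destruct (Nat.even p), e, e'; simpl in *; split; intro; auto; discriminate.
Qed.

Lemma Rmap_0 : Rmap 0 = 2/3.
Proof. unfold Rmap. destruct (excluded_middle_informative _); [reflexivity | contradiction]. Qed.

Lemma Rmap_1 : Rmap 1 = 1/3.
Proof.
  pose proof (bin_val_const true) as E1. pose proof (bin_val_alt true) as E3. simpl in E1, E3.
  rewrite <- E3, <- E1, Rmap_bin_val by apply inf_ones_const.
  apply bin_val_ext, rho_spec. intros k Hk. apply kth_one_parity_const, Hk.
Qed.

Lemma Rmap_alt e : Rmap (bin_val (alt_word e)) = bin_val (const_word e).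
Proof.
  rewrite Rmap_bin_val by apply inf_ones_alt.
  apply bin_val_ext, rho_spec. intros k Hk. rewrite kth_one_parity_alt by exact Hk.
  unfold const_word. tauto.
Qed.

Lemma Rmap_1_3 : Rmap (1/3) = 1.
Proof. pose proof (Rmap_alt true) as H. rewrite bin_val_alt, bin_val_const in H. exact H. Qed.

Lemma Rmap_2_3 : Rmap (2/3) = 0.
Proof. pose proof (Rmap_alt false) as H. rewrite bin_val_alt, bin_val_const in H. exact H. Qed.

(** * Eventually periodic words have rational values *)

Definition is_rational (x : R) : Prop := exists r : Q, x = Q2R r.

Lemma is_rational_0 : is_rational 0.
Proof. exists 0%Q. rewrite RMicromega.Q2R_0; auto. Qed.

Lemma is_rational_1 : is_rational 1.
Proof. exists 1%Q. rewrite RMicromega.Q2R_1; auto. Qed.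

Lemma is_rational_plus x y : is_rational x -> is_rational y -> is_rational (x + y).
Proof. intros [r ->] [s ->]. exists (r + s)%Q. rewrite Q2R_plus; auto. Qed.

Lemma is_rational_mult x y : is_rational x -> is_rational y -> is_rational (x * y).
Proof. intros [r ->] [s ->]. exists (r * s)%Q. rewrite Q2R_mult; auto. Qed.

Lemma is_rational_minus x y : is_rational x -> is_rational y -> is_rational (x - y).
Proof. intros [r ->] [s ->]. exists (r - s)%Q. rewrite Q2R_minus; auto. Qed.

Lemma is_rational_inv x : is_rational x -> is_rational (/ x).
Proof.
  intros [r ->]. exists (/ r)%Q. rewrite RMicromega.Q2R_inv_ext.
  destruct (Qeq_bool r 0) eqn:E; auto.
  apply Qeq_bool_eq, Qeq_eqR in E. rewrite E, RMicromega.Q2R_0. apply Rinv_0.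
Qed.

Lemma is_rational_2 : is_rational 2.
Proof. replace 2 with (1 + 1) by lra. apply is_rational_plus; apply is_rational_1. Qed.

Lemma is_rational_div x y : is_rational x -> is_rational y -> is_rational (x / y).
Proof. intros. apply is_rational_mult; [| apply is_rational_inv]; auto. Qed.

Lemma is_rational_pow x n : is_rational x -> is_rational (x ^ n).
Proof. intro H. induction n; simpl; [apply is_rational_1 | apply is_rational_mult; auto]. Qed.

Lemma is_rational_bit c : is_rational (bit_val c).
Proof. destruct c; [apply is_rational_inv, is_rational_2 | apply is_rational_0]. Qed.

Fixpoint prefix_val (b : nat -> bool) (n : nat) : R :=
  match n with
  | O => 0
  | S n => bit_val (b 1%nat) + prefix_val (shift b) n / 2
  end.

Lemma is_rational_prefix_val n : forall b, is_rational (prefix_val b n).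
Proof.
  induction n as [| n IH]; intro b; simpl; [apply is_rational_0 |].
  apply is_rational_plus; [apply is_rational_bit | apply is_rational_div; [apply IH | apply is_rational_2]].
Qed.

Definition shiftn (n : nat) (b : nat -> bool) : nat -> bool := fun k => b (n + k)%nat.

Lemma bin_val_split n : forall b, bin_val b = prefix_val b n + bin_val (shiftn n b) / 2 ^ n.
Proof.
  induction n as [| n IH]; intro b.
  - change (bin_val b = 0 + bin_val b / 1). lra.
  - rewrite bin_val_cons, (IH (shift b)). simpl prefix_val.
    change (shiftn n (shift b)) with (shiftn (S n) b).
    assert (0 < 2 ^ n) by (apply pow_lt; lra). simpl. field. lra.
Qed.

Definition eventually_periodic (b : nat -> bool) (N P : nat) : Prop :=
  (1 <= P)%nat /\ forall n, (N < n)%nat -> b (n + P)%nat = b n.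

(* A purely periodic word satisfies [x = u + x / 2^P] with [u] dyadic; in general
   peel off the preperiod digit by digit. *)
Lemma eventually_periodic_rational N : forall b P, eventually_periodic b N P -> is_rational (bin_val b).
Proof.
  induction N as [| N IH]; intros b P [HP Hper].
  - pose proof (bin_val_split P b) as E.
    rewrite (bin_val_ext (shiftn P b) b) in E
      by (intros n Hn; unfold shiftn; rewrite Nat.add_comm; apply Hper; lia).
    assert (H2 : 2 <= 2 ^ P).
    { destruct P; [lia |]. simpl. pose proof (pow_R1_Rle 2 P ltac:(lra)). lra. }
    assert (Hfix : bin_val b * 2 ^ P = prefix_val b P * 2 ^ P + bin_val b)
      by (rewrite E at 1; field; lra).
    replace (bin_val b) with (prefix_val b P * 2 ^ P / (2 ^ P - 1)).
    2: { unfold Rdiv. apply (Rmult_eq_reg_r (2 ^ P - 1)); [| lra].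
         rewrite Rmult_assoc, Rinv_l by lra. lra. }
    apply is_rational_div; [apply is_rational_mult | apply is_rational_minus];
      auto using is_rational_prefix_val, is_rational_pow, is_rational_2, is_rational_1.
  - rewrite bin_val_cons.
    apply is_rational_plus; [apply is_rational_bit | apply is_rational_div; [| apply is_rational_2]].
    apply (IH (shift b) P). split; [exact HP |]. intros n Hn. unfold shift.
    replace (S (n + P)) with (S n + P)%nat by lia. apply Hper. lia.
Qed.

Lemma Qset_bin_val b : is_rational (bin_val b) -> Qset (bin_val b).
Proof.
  intros [r Hr]. split; [exists r; exact Hr |]. split; [apply bin_val_nonneg | apply bin_val_le_1].
Qed.

(** * Rationals in (0,1] have eventually periodic expansions *)

Lemma pigeonhole q (f : nat -> nat) : (forall i, (i <= q)%nat -> (1 <= f i <= q)%nat) ->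
  exists i j, (i < j <= q)%nat /\ f i = f j.
Proof.
  intro Hf. set (l := map f (seq 0 (S q))).
  assert (Hdup : ~ NoDup l).
  { intro Hnd. assert (Hincl : incl l (seq 1 q)).
    { intros y Hy. apply in_map_iff in Hy as [i [<- Hi]]. apply in_seq in Hi.
      apply in_seq. pose proof (Hf i ltac:(lia)). lia. }
    pose proof (NoDup_incl_length Hnd Hincl) as Hlen.
    unfold l in Hlen. rewrite length_map, !length_seq in Hlen. lia. }
  rewrite (NoDup_nth l (f 0%nat)) in Hdup.
  apply not_all_ex_not in Hdup as [i Hdup]. apply not_all_ex_not in Hdup as [j Hdup].
  apply imply_to_and in Hdup as [Hi Hdup]. apply imply_to_and in Hdup as [Hj Hdup].
  apply imply_to_and in Hdup as [Heq Hij].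
  unfold l in Hi, Hj, Heq. rewrite length_map, length_seq in Hi, Hj.
  rewrite !map_nth, !seq_nth in Heq by lia.
  destruct (proj1 (Nat.lt_gt_cases i j) Hij) as [Hlt | Hlt].
  - exists i, j. split; [lia | exact Heq].
  - exists j, i. split; [lia | symmetry; exact Heq].
Qed.

(* For [x = p/q] in (0,1], its expansion with infinitely many 1's is produced by the
   doubling map on numerators in [1, q]: digit 1 and [p |-> 2p - q] if [2p > q],
   digit 0 and [p |-> 2p] otherwise. *)
Definition doubling_step (q p : nat) : nat :=
  if Nat.ltb q (2 * p) then (2 * p - q)%nat else (2 * p)%nat.

Definition doubling_state (q p n : nat) : nat := Nat.iter n (doubling_step q) p.

Definition doubling_digits (q p : nat) (n : nat) : bool :=
  match n with O => false | S n' => Nat.ltb q (2 * doubling_state q p n') end.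

Lemma doubling_step_range q p : (0 < p <= q)%nat -> (0 < doubling_step q p <= q)%nat.
Proof. intro H. unfold doubling_step. destruct (Nat.ltb_spec q (2 * p)); lia. Qed.

Lemma doubling_state_range q p n : (0 < p <= q)%nat -> (0 < doubling_state q p n <= q)%nat.
Proof. intro H. induction n; simpl; auto. apply doubling_step_range. exact IHn. Qed.

Lemma doubling_digits_shift q p n : (1 <= n)%nat ->
  shift (doubling_digits q p) n = doubling_digits q (doubling_step q p) n.
Proof.
  intro Hn. destruct n as [| n]; [lia |]. unfold shift, doubling_digits, doubling_state.
  rewrite Nat.iter_succ_r. reflexivity.
Qed.

Lemma doubling_error_step q p : (0 < p <= q)%nat ->
  bin_val (doubling_digits q p) - INR p / INR q =
  (bin_val (doubling_digits q (doubling_step q p)) - INR (doubling_step q p) / INR q) / 2.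
Proof.
  intro H. rewrite bin_val_cons.
  rewrite (bin_val_ext (shift (doubling_digits q p)) (doubling_digits q (doubling_step q p)))
    by apply doubling_digits_shift.
  assert (Hq : 0 < INR q) by (apply lt_0_INR; lia).
  unfold doubling_step, bit_val. change (doubling_digits q p 1) with (Nat.ltb q (2 * p)).
  destruct (Nat.ltb_spec q (2 * p)).
  - rewrite minus_INR, mult_INR by lia. change (INR 2) with 2. field. lra.
  - rewrite mult_INR. change (INR 2) with 2. field. lra.
Qed.

(* The error [bin_val - p/q] lies in [-1,1] and is halved at each digit, so it is 0. *)
Lemma doubling_digits_val q p : (0 < p <= q)%nat -> bin_val (doubling_digits q p) = INR p / INR q.
Proof.
  intro H.
  assert (Hbound : forall n p, (0 < p <= q)%nat ->
            Rabs (bin_val (doubling_digits q p) - INR p / INR q) <= (/2) ^ n).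
  { induction n as [| n IH]; intros p' Hp'.
    - assert (Hq : 0 < INR q) by (apply lt_0_INR; lia).
      assert (0 <= INR p' / INR q <= 1).
      { split; [apply Rdiv_le_0_compat; [apply pos_INR | lra] |].
        unfold Rdiv. apply (Rmult_le_reg_r (INR q)); [lra |].
        rewrite Rmult_assoc, Rinv_l, Rmult_1_r, Rmult_1_l by lra. apply le_INR; lia. }
      pose proof (bin_val_nonneg (doubling_digits q p')).
      pose proof (bin_val_le_1 (doubling_digits q p')).
      simpl. apply Rabs_le. lra.
    - rewrite doubling_error_step by auto. unfold Rdiv. rewrite Rabs_mult, (Rabs_pos_eq (/2)) by lra.
      simpl. pose proof (IH (doubling_step q p') (doubling_step_range q p' Hp')). lra. }
  apply NNPP. intro Hne. apply Rminus_eq_contra, Rabs_pos_lt in Hne.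
  destruct (pow_lt_1_zero (/2) ltac:(rewrite Rabs_pos_eq; lra) _ Hne) as [N HN].
  specialize (HN N ltac:(lia)). specialize (Hbound N p H).
  rewrite Rabs_pos_eq in HN by (apply pow_le; lra). lra.
Qed.

(* If all digits after [N] were 0, the numerators would double forever, leaving [1, q]. *)
Lemma doubling_digits_inf_ones q p : (0 < p <= q)%nat -> inf_ones (doubling_digits q p).
Proof.
  intros H N. apply NNPP. intro Hn.
  assert (Hz : forall n, (N <= n)%nat -> doubling_digits q p n = false).
  { intros n Hn'. apply Bool.not_true_iff_false. intro E. apply Hn. exists n; auto. }
  assert (Hgrow : forall k, doubling_state q p (N + k) = (2 ^ k * doubling_state q p N)%nat).
  { induction k as [| k IH]; [rewrite Nat.add_0_r; simpl; lia |].
    rewrite Nat.add_succ_r. unfold doubling_state at 1. simpl Nat.iter.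
    fold (doubling_state q p (N + k)).
    specialize (Hz (S (N + k)) ltac:(lia)).
    change (Nat.ltb q (2 * doubling_state q p (N + k)) = false) in Hz.
    unfold doubling_step. rewrite Hz, IH. simpl. lia. }
  pose proof (doubling_state_range q p (N + q) H) as Hbig. rewrite Hgrow in Hbig.
  pose proof (doubling_state_range q p N H). pose proof (Nat.pow_gt_lin_r 2 q ltac:(lia)). nia.
Qed.

(* The numerators take at most [q] values, so they eventually cycle. *)
Lemma doubling_digits_periodic q p : (0 < p <= q)%nat ->
  exists N P, eventually_periodic (doubling_digits q p) N P.
Proof.
  intro H. destruct (pigeonhole q (doubling_state q p)) as [i [j [Hij E]]].
  { intros i Hi. pose proof (doubling_state_range q p i H). lia. }
  exists i, (j - i)%nat. split; [lia |]. intros n Hn.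
  destruct n as [| n]; [lia |]. replace (S n + (j - i))%nat with (S (n + (j - i))) by lia.
  unfold doubling_digits, doubling_state.
  replace (n + (j - i))%nat with ((n - i) + j)%nat by lia.
  rewrite Nat.iter_add. fold (doubling_state q p j). rewrite <- E. unfold doubling_state.
  rewrite <- Nat.iter_add. do 3 f_equal. lia.
Qed.

Lemma rational_expansion x : Qset x -> 0 < x ->
  exists b N P, inf_ones b /\ bin_val b = x /\ eventually_periodic b N P.
Proof.
  intros [[r Hr] [H0 H1]] Hx. destruct r as [z d]. unfold Q2R in Hr. simpl in Hr.
  assert (Hd : 0 < IZR (Z.pos d)) by (apply IZR_lt; lia).
  assert (Hz : (0 < z)%Z).
  { apply lt_IZR. subst x. apply Rmult_lt_reg_r with (/ IZR (Z.pos d)); [apply Rinv_0_lt_compat |]; lra. }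
  assert (Hzd : (z <= Z.pos d)%Z).
  { apply le_IZR. subst x. apply Rmult_le_reg_r with (/ IZR (Z.pos d)); [apply Rinv_0_lt_compat; lra |].
    rewrite Rinv_r; lra. }
  set (p := Z.to_nat z). set (q := Pos.to_nat d).
  assert (Hpq : (0 < p <= q)%nat) by (unfold p, q; lia).
  destruct (doubling_digits_periodic q p Hpq) as [N [P HP]].
  exists (doubling_digits q p), N, P. split; [apply doubling_digits_inf_ones; auto |].
  split; [| exact HP].
  rewrite doubling_digits_val, Hr by auto. unfold p, q.
  rewrite !INR_IZR_INZ, Znat.Z2Nat.id, Znat.positive_nat_Z by lia. reflexivity.
Qed.

(** * rho maps eventually periodic words to eventually periodic words *)

Definition periodic_ones (b : nat -> bool) (N P m : nat) : Prop :=
  eventually_periodic b N P /\ ones b (N + P) = (ones b N + m)%nat.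

Lemma periodic_ones_intro b N P : eventually_periodic b N P ->
  periodic_ones b N P (ones b (N + P) - ones b N).
Proof.
  intro H. split; [exact H |]. pose proof (ones_mono b N (N + P) ltac:(lia)). lia.
Qed.

Lemma ones_period b N P m : periodic_ones b N P m ->
  forall d, ones b (N + d + P) = (ones b (N + d) + m)%nat.
Proof.
  intros [[HP Hper] Hm] d. induction d as [| d IH]; [rewrite Nat.add_0_r; exact Hm |].
  replace (N + S d + P)%nat with (S (N + d + P)) by lia.
  replace (N + S d)%nat with (S (N + d)) by lia.
  rewrite !ones_S, IH. replace (S (N + d + P)) with (S (N + d) + P)%nat by lia.
  rewrite Hper by lia. lia.
Qed.

Lemma periodic_ones_pos b N P m : inf_ones b -> periodic_ones b N P m -> (1 <= m)%nat.
Proof.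
  intros Hb H. destruct m as [| m]; [| lia]. exfalso.
  assert (Hflat : forall j, ones b (N + j * P) = ones b N).
  { induction j as [| j IH]; [rewrite Nat.add_0_r; reflexivity |].
    replace (N + S j * P)%nat with (N + j * P + P)%nat by lia.
    rewrite (ones_period b N P 0 H (j * P)), IH. lia. }
  destruct (ones_unbounded b Hb (S (ones b N))) as [M HM].
  destruct H as [[HP _] _]. pose proof (ones_mono b M (N + M * P) ltac:(nia)). rewrite Hflat in *. lia.
Qed.

(* Shifting a 1 of rank [k > ones b N] by one period raises its rank by [m] and changes the
   parity of its position by that of [P]. *)
Lemma kth_one_parity_period b N P m e k : periodic_ones b N P m -> (ones b N < k)%nat ->
  (kth_one_parity e b k <-> kth_one_parity (if Nat.even P then e else negb e) b (k + m)).
Proof.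
  intros H Hk. pose proof (ones_period b N P m H) as Hop. destruct H as [[HP Hper] Hm]. split.
  - intros [p [H1 [H2 [H3 H4]]]].
    assert (Hp : (N < p)%nat) by (apply (ones_lt b); lia).
    exists (p + P)%nat. split; [lia |]. rewrite Hper by lia. split; auto. split.
    + rewrite Nat.even_add, H3. destruct e, (Nat.even P); auto.
    + replace p with (N + (p - N))%nat by lia. rewrite Hop. replace (N + (p - N))%nat with p by lia. lia.
  - intros [p' [H1 [H2 [H3 H4]]]].
    assert (Hp : (N + P < p')%nat) by (apply (ones_lt b); lia).
    exists (p' - P)%nat. split; [lia |].
    assert (Hb : b (p' - P)%nat = true)
      by (rewrite <- Hper by lia; replace (p' - P + P)%nat with p' by lia; auto).
    split; auto. split.
    + replace p' with (p' - P + P)%nat in H3 by lia. rewrite Nat.even_add in H3.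
      destruct e, (Nat.even P), (Nat.even (p' - P)); simpl in *; auto; discriminate.
    + pose proof (Hop (p' - P - N)%nat) as E. replace (N + (p' - P - N))%nat with (p' - P)%nat in E by lia.
      replace (p' - P + P)%nat with p' in E by lia. lia.
Qed.

Lemma rho_period_even b N P m k : periodic_ones b N P m -> Nat.even P = true ->
  (ones b N < k)%nat -> rho b (k + m) = rho b k.
Proof.
  intros H HP Hk. apply Bool.eq_iff_eq_true. rewrite !rho_true_iff.
  rewrite (kth_one_parity_period b N P m true k H Hk), HP. reflexivity.
Qed.

Lemma rho_period_odd b N P m k : inf_ones b -> periodic_ones b N P m -> Nat.even P = false ->
  (ones b N < k)%nat -> rho b (k + m) = negb (rho b k).
Proof.
  intros Hb H HP Hk. pose proof (kth_one_parity_period b N P m true k H Hk) as E.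
  rewrite HP, rho_false_iff in E by (auto; lia). rewrite <- rho_true_iff in E.
  destruct (rho b k), (rho b (k + m)); simpl; intuition congruence.
Qed.

Lemma rho_eventually_periodic b N P m : inf_ones b -> periodic_ones b N P m ->
  eventually_periodic (rho b) (ones b N) (2 * m).
Proof.
  intros Hb H. pose proof (periodic_ones_pos b N P m Hb H). split; [lia |].
  intros n Hn. replace (n + 2 * m)%nat with (n + m + m)%nat by lia.
  destruct (Nat.even P) eqn:HP.
  - rewrite !(rho_period_even b N P m) by (auto; lia). reflexivity.
  - rewrite !(rho_period_odd b N P m) by (auto; lia). apply negb_involutive.
Qed.

Lemma Rmap_Qset x : Qset x -> Qset (Rmap x).
Proof.
  intro Hq. destruct (Req_dec x 0) as [-> | Hne].
  - rewrite Rmap_0. split; [| lra]. exists (2 # 3)%Q. unfold Q2R. simpl. lra.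
  - assert (Hx : 0 < x) by (destruct Hq as [_ [H1 _]]; lra).
    destruct (rational_expansion x Hq Hx) as [b [N [P [Hb [<- HP]]]]].
    rewrite Rmap_bin_val by exact Hb. apply Qset_bin_val.
    eapply eventually_periodic_rational, rho_eventually_periodic, periodic_ones_intro; eauto.
Qed.

(** * Words with a finite prefix, and R^2 on eventually constant words *)

Definition cons_word (a : bool) (s : nat -> bool) : nat -> bool :=
  fun n => match n with O => false | S O => a | S m => s m end.

Fixpoint prepend (u : list bool) (t : nat -> bool) : nat -> bool :=
  match u with [] => t | a :: u' => cons_word a (prepend u' t) end.

Lemma bin_val_cons_word a s : bin_val (cons_word a s) = bit_val a + bin_val s / 2.
Proof.
  rewrite bin_val_cons. rewrite (bin_val_ext (shift (cons_word a s)) s); [reflexivity |].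
  intros n Hn. destruct n; [lia | reflexivity].
Qed.

Lemma prepend_app u1 u2 t : prepend (u1 ++ u2) t = prepend u1 (prepend u2 t).
Proof. induction u1 as [| a u1 IH]; simpl; [reflexivity | rewrite IH; reflexivity]. Qed.

Lemma prepend_nth u t k : (1 <= k)%nat ->
  prepend u t k = if Nat.leb k (length u) then nth (k - 1) u false else t (k - length u)%nat.
Proof.
  revert k. induction u as [| a u IH]; intros k Hk.
  - simpl. rewrite Nat.sub_0_r. destruct k; [lia | reflexivity].
  - simpl prepend. unfold cons_word. destruct k as [| [| k]]; [lia | reflexivity |].
    rewrite IH by lia. simpl length.
    replace (S (S k) - 1)%nat with (S k) by lia. replace (S k - 1)%nat with k by lia.
    destruct (Nat.leb_spec (S k) (length u)), (Nat.leb_spec (S (S k)) (S (length u)));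
      try lia; reflexivity.
Qed.

Lemma inf_ones_prepend u t : inf_ones t -> inf_ones (prepend u t).
Proof.
  intro H. induction u as [| a u IH]; simpl; auto.
  intro N. destruct (IH (S N)) as [n [Hn Hs]]. exists (S n). split; [lia |].
  destruct n; [lia | exact Hs].
Qed.

Lemma Qset_prepend_ones u : Qset (bin_val (prepend u (const_word true))).
Proof.
  apply Qset_bin_val, (eventually_periodic_rational (length u) _ 1). split; [lia |].
  intros n Hn. rewrite !prepend_nth by lia.
  destruct (Nat.leb_spec (n + 1) (length u)), (Nat.leb_spec n (length u)); try lia. reflexivity.
Qed.

Lemma eventually_const_prefix c K e : (forall k, (K < k)%nat -> c k = e) ->
  bin_val c = bin_val (prepend (map c (seq 1 K)) (const_word e)).
Proof.
  intro H. apply bin_val_ext. intros n Hn. rewrite prepend_nth by exact Hn.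
  rewrite length_map, length_seq.
  destruct (Nat.leb_spec n K).
  - rewrite (nth_indep _ false (c 0%nat)) by (rewrite length_map, length_seq; lia).
    rewrite map_nth, seq_nth by lia. f_equal. lia.
  - unfold const_word. apply H. lia.
Qed.

Lemma finite_word_value w : bin_val (prepend w (const_word false)) = 0 \/
  exists w', (length w' <= length w)%nat /\
    bin_val (prepend w (const_word false)) = bin_val (prepend w' (const_word true)).
Proof.
  induction w as [| a w [H0 | [w' [Hlen Hw']]]]; simpl prepend; simpl length.
  - left. rewrite bin_val_const. reflexivity.
  - rewrite bin_val_cons_word, H0. destruct a; unfold bit_val.
    + right. exists [false]. split; [simpl; lia |].
      simpl prepend. rewrite bin_val_cons_word, bin_val_const. unfold bit_val. lra.
    + left. lra.
  - right. exists (a :: w'). split; [simpl; lia |].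
    simpl prepend. rewrite !bin_val_cons_word, Hw'. reflexivity.
Qed.

(* Prepending a digit shifts the positions of all 1's by one, so it swaps their parity;
   a prepended 1 becomes the first 1, at the odd position 1. *)
Lemma ones_cons_word a s n : ones (cons_word a s) (S n) = (bit_nat a + ones s n)%nat.
Proof.
  induction n; [destruct a; simpl; lia |]. rewrite ones_S, IHn, ones_S.
  change (cons_word a s (S (S n))) with (s (S n)). lia.
Qed.

Lemma kth_one_parity_cons_false e s k :
  kth_one_parity e (cons_word false s) k <-> kth_one_parity (negb e) s k.
Proof.
  split.
  - intros [p [H1 [H2 [H3 H4]]]]. destruct p as [| [| p]]; try lia; [discriminate |].
    exists (S p). split; [lia |]. split; [exact H2 |]. split.
    + rewrite Nat.even_succ, <- Nat.negb_even in H3. rewrite <- H3, negb_involutive. reflexivity.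
    + rewrite ones_cons_word in H4. exact H4.
  - intros [p [H1 [H2 [H3 H4]]]]. exists (S p). split; [lia |]. split.
    + destruct p; [lia | exact H2].
    + split; [rewrite Nat.even_succ, <- Nat.negb_even, H3, negb_involutive; reflexivity |].
      rewrite ones_cons_word. exact H4.
Qed.

Lemma kth_one_parity_cons_true e s k : kth_one_parity e (cons_word true s) k <->
  ((k = 1%nat /\ e = false) \/ ((2 <= k)%nat /\ kth_one_parity (negb e) s (k - 1))).
Proof.
  split.
  - intros [p [H1 [H2 [H3 H4]]]]. destruct p as [| [| p]]; try lia.
    + left. simpl in H3, H4. auto.
    + right. rewrite ones_cons_word in H4. change (bit_nat true) with 1%nat in H4.
      pose proof (ones_at_one s (S p) ltac:(lia) H2). split; [lia |].
      exists (S p). split; [lia |]. split; [exact H2 |]. split; [| lia].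
      rewrite Nat.even_succ, <- Nat.negb_even in H3. rewrite <- H3, negb_involutive. reflexivity.
  - intros [[-> ->] | [Hk [p [H1 [H2 [H3 H4]]]]]].
    + exists 1%nat. simpl. auto.
    + exists (S p). split; [lia |]. split; [destruct p; [lia | exact H2] |].
      split; [rewrite Nat.even_succ, <- Nat.negb_even, H3, negb_involutive; reflexivity |].
      rewrite ones_cons_word. simpl. lia.
Qed.

(* [rho_list e u] is rho applied to the finite word [u], where [e] says whether the first
   position of [u] counts as odd (a 1 there becomes [negb e]). *)
Fixpoint rho_list (e : bool) (u : list bool) : list bool :=
  match u with
  | [] => []
  | true :: u' => negb e :: rho_list (negb e) u'
  | false :: u' => rho_list (negb e) u'
  end.

Fixpoint count_ones (u : list bool) : nat :=
  match u with [] => O | a :: u' => (bit_nat a + count_ones u')%nat end.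

Lemma length_rho_list u : forall e, length (rho_list e u) = count_ones u.
Proof. induction u as [| a u IH]; intro e; simpl; auto. destruct a; simpl; rewrite IH; auto. Qed.

Lemma count_ones_le u : (count_ones u <= length u)%nat.
Proof. induction u as [| a u IH]; simpl; auto. destruct a; simpl; lia. Qed.

(* Negate [e] when [n] is odd: the parity shift caused by a prefix of length [n]. *)
Definition flip (n : nat) (e : bool) : bool := if Nat.even n then e else negb e.

Lemma flip_S n e : flip (S n) e = flip n (negb e).
Proof. unfold flip. rewrite Nat.even_succ, <- Nat.negb_even. destruct (Nat.even n), e; auto. Qed.

Definition prefix_then (l : list bool) (P : nat -> Prop) (k : nat) : Prop :=
  if Nat.leb k (length l) then nth (k - 1) l false = true else P (k - length l)%nat.

Lemma kth_one_parity_prepend u : forall e t k, (1 <= k)%nat ->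
  (kth_one_parity e (prepend u t) k <->
   prefix_then (rho_list e u) (kth_one_parity (flip (length u) e) t) k).
Proof.
  induction u as [| a u IH]; intros e t k Hk.
  - unfold prefix_then, flip. simpl. destruct k; [lia |]. reflexivity.
  - simpl prepend. simpl length. rewrite flip_S. destruct a.
    + rewrite kth_one_parity_cons_true. simpl rho_list. unfold prefix_then. simpl length.
      destruct k as [| [| k]]; [lia | |].
      * simpl. destruct e; simpl; intuition (try discriminate; try lia).
      * rewrite (IH (negb e) t (S (S k) - 1)%nat ltac:(lia)). unfold prefix_then.
        replace (S (S k) - 1)%nat with (S k) by lia.
        destruct (Nat.leb_spec (S k) (length (rho_list (negb e) u))),
                 (Nat.leb_spec (S (S k)) (S (length (rho_list (negb e) u)))); try lia;
          simpl; rewrite ?Nat.sub_0_r; intuition lia.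
    + rewrite kth_one_parity_cons_false. simpl rho_list. rewrite IH by auto. reflexivity.
Qed.

Lemma rho_prepend u t w :
  (forall j, (1 <= j)%nat -> (kth_one_parity (flip (length u) true) t j <-> w j = true)) ->
  forall k, (1 <= k)%nat -> rho (prepend u t) k = prepend (rho_list true u) w k.
Proof.
  intros Hw. apply rho_spec. intros k Hk.
  rewrite kth_one_parity_prepend, prepend_nth by exact Hk. unfold prefix_then.
  destruct (Nat.leb_spec k (length (rho_list true u))); [reflexivity |]. apply Hw. lia.
Qed.

Lemma Rmap2_prepend_ones u :
  Rmap (Rmap (bin_val (prepend u (const_word true)))) =
  bin_val (prepend (rho_list true (rho_list true u))
             (const_word (Bool.eqb (Nat.even (count_ones u)) (Nat.even (length u))))).
Proof.
  set (e1 := flip (length u) true).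
  rewrite Rmap_bin_val by apply inf_ones_prepend, inf_ones_const.
  rewrite (bin_val_ext _ (prepend (rho_list true u) (alt_word e1)))
    by (apply rho_prepend; intros j Hj; apply kth_one_parity_const, Hj).
  rewrite Rmap_bin_val by apply inf_ones_prepend, inf_ones_alt.
  apply bin_val_ext, rho_prepend. intros j Hj. rewrite kth_one_parity_alt by exact Hj.
  unfold e1, flip, const_word. rewrite length_rho_list.
  destruct (Nat.even (length u)), (Nat.even (count_ones u)); simpl; intuition congruence.
Qed.

(** * Every rational orbit reaches 0 or 1 *)

Definition reaches_01 (x : R) : Prop :=
  exists k, Nat.iter k Rmap x = 0 \/ Nat.iter k Rmap x = 1.

Lemma reaches_01_Rmap x : reaches_01 (Rmap x) -> reaches_01 x.
Proof. intros [k Hk]. exists (S k). rewrite Nat.iter_succ_r. exact Hk. Qed.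

Lemma rho_list_twice_shorter u : u <> [] -> (length (rho_list true (rho_list true u)) < length u)%nat.
Proof.
  intro Hu. rewrite length_rho_list. destruct u as [| a u]; [contradiction |].
  pose proof (count_ones_le (rho_list (negb true) u)). rewrite length_rho_list in H.
  pose proof (count_ones_le u). destruct a; simpl in *; lia.
Qed.

Lemma reaches_01_prepend_ones u : reaches_01 (bin_val (prepend u (const_word true))).
Proof.
  induction u as [u IH] using (Wf_nat.induction_ltof1 _ (@length bool)). unfold Wf_nat.ltof in IH.
  destruct u as [| a u'] eqn:Eu.
  - exists 0%nat. right. apply (bin_val_const true).
  - rewrite <- Eu in *. apply reaches_01_Rmap, reaches_01_Rmap. rewrite Rmap2_prepend_ones.
    assert (Hshort := rho_list_twice_shorter u ltac:(congruence)).
    set (u2 := rho_list true (rho_list true u)) in *.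
    destruct (Bool.eqb _ _).
    + apply IH, Hshort.
    + destruct (finite_word_value u2) as [H0 | [w' [Hlen ->]]].
      * exists 0%nat. left. exact H0.
      * apply IH. lia.
Qed.

(* Every eventually constant word reaches 0 or 1: write it as [u 111...] or
   [u 000...], and the latter is 0 or again of the first form. *)
Lemma reaches_01_eventually_const c K e : (forall k, (K < k)%nat -> c k = e) -> reaches_01 (bin_val c).
Proof.
  intro H. rewrite (eventually_const_prefix c K e H).
  destruct e; [apply reaches_01_prepend_ones |].
  destruct (finite_word_value (map c (seq 1 K))) as [H0 | [w' [_ ->]]].
  - exists 0%nat. left. exact H0.
  - apply reaches_01_prepend_ones.
Qed.

Lemma not_inf_ones_eventually_zero c : ~ inf_ones c -> exists J, forall j, (J < j)%nat -> c j = false.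
Proof.
  intro H. apply NNPP. intro H2. apply H. intro N. apply NNPP. intro H3. apply H2.
  exists N. intros j Hj. apply Bool.not_true_iff_false. intro E. apply H3. exists j. split; [lia | exact E].
Qed.

Lemma full_window_ones c A j : ones c (A + j) = (ones c A + j)%nat ->
  forall i, (A < i <= A + j)%nat -> c i = true.
Proof.
  induction j as [| j IH]; intros H i Hi; [lia |].
  rewrite Nat.add_succ_r, ones_S in H. pose proof (ones_add_le c A j).
  destruct (c (S (A + j))) eqn:E; simpl in H; [| lia].
  destruct (Nat.eq_dec i (S (A + j))); [subst; exact E |]. apply IH; lia.
Qed.

Lemma full_period_ones c K P : periodic_ones c K P P -> forall i, (K < i)%nat -> c i = true.
Proof.
  intros [[HP Hper] Hfull] i. induction i as [i IH] using (well_founded_induction Wf_nat.lt_wf). intro Hi.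
  destruct (Nat.le_gt_cases i (K + P)) as [Hle | Hgt]; [apply (full_window_ones c K P Hfull); lia |].
  replace i with ((i - P) + P)%nat by lia. rewrite Hper by lia. apply IH; lia.
Qed.

Lemma antiperiodic_ones c A m : (forall k, (A < k)%nat -> c (k + m)%nat = negb (c k)) ->
  ones c (A + 2 * m) = (ones c A + m)%nat.
Proof.
  intro H.
  assert (G : forall j, (ones c (A + m + j) + ones c (A + j) = ones c (A + m) + ones c A + j)%nat).
  { induction j as [| j IH]; [rewrite !Nat.add_0_r; lia |].
    rewrite !Nat.add_succ_r, !ones_S.
    replace (S (A + m + j)) with (S (A + j) + m)%nat by lia. rewrite H by lia.
    destruct (c (S (A + j))); simpl; lia. }
  specialize (G m). replace (A + 2 * m)%nat with (A + m + m)%nat by lia. lia.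
Qed.

(* Even period [P] with [m] ones: [rho b] has period [m] and at most [m] ones per period;
   either all of them are 1 (then we conclude), or there are fewer (then induct),
   or [rho b] has finitely many 1's. *)
Lemma reaches_01_even_period m
  (IH : forall m', (m' < m)%nat -> forall b N P, inf_ones b -> periodic_ones b N P m' -> reaches_01 (bin_val b)) :
  forall b N P, inf_ones b -> periodic_ones b N P m -> Nat.even P = true -> reaches_01 (bin_val b).
Proof.
  intros b N P Hb H HP. pose proof (periodic_ones_pos b N P m Hb H) as Hm.
  set (K := ones b N). set (c := rho b).
  assert (Hper : eventually_periodic c K m)
    by (split; [lia | intros k Hk; apply (rho_period_even b N P m); auto]).
  apply reaches_01_Rmap. rewrite Rmap_bin_val by exact Hb. fold c.
  destruct (classic (inf_ones c)) as [Hc | Hc].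
  - pose proof (periodic_ones_intro c K m Hper) as Hc_ones.
    pose proof (ones_add_le c K m).
    destruct (Nat.eq_dec (ones c (K + m) - ones c K) m) as [E | E].
    + rewrite E in Hc_ones. apply (reaches_01_eventually_const c K true), (full_period_ones c K m Hc_ones).
    + apply (IH (ones c (K + m) - ones c K)%nat ltac:(lia) c K m Hc Hc_ones).
  - destruct (not_inf_ones_eventually_zero c Hc) as [J HJ].
    apply (reaches_01_eventually_const c J false HJ).
Qed.

(* Strong induction on the number [m] of ones per period; an odd period is first
   turned into an even one by one application of R. *)
Lemma reaches_01_periodic m : forall b N P, inf_ones b -> periodic_ones b N P m -> reaches_01 (bin_val b).
Proof.
  induction m as [m IH] using (well_founded_induction Wf_nat.lt_wf). intros b N P Hb H.
  destruct (Nat.even P) eqn:HP; [exact (reaches_01_even_period m IH b N P Hb H HP) |].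
  pose proof (periodic_ones_pos b N P m Hb H) as Hm.
  set (K := ones b N). set (c := rho b).
  assert (Hanti : forall k, (K < k)%nat -> c (k + m)%nat = negb (c k))
    by (intros; apply (rho_period_odd b N P m); auto).
  assert (Hc : inf_ones c).
  { intro M. destruct (c (M + S K)%nat) eqn:E.
    - exists (M + S K)%nat. split; [lia | exact E].
    - exists (M + S K + m)%nat. split; [lia |]. rewrite Hanti, E by lia. reflexivity. }
  assert (Hc_ones : periodic_ones c K (2 * m) m).
  { split; [apply rho_eventually_periodic with P; auto | apply antiperiodic_ones, Hanti]. }
  apply reaches_01_Rmap. rewrite Rmap_bin_val by exact Hb. fold c.
  apply (reaches_01_even_period m IH c K (2 * m) Hc Hc_ones). rewrite Nat.even_mul. reflexivity.
Qed.

Lemma reaches_01_rational x : Qset x -> reaches_01 x.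
Proof.
  intro Hq. destruct (Req_dec x 0) as [E | E]; [exists 0%nat; left; exact E |].
  assert (Hx : 0 < x) by (destruct Hq as [_ [H1 _]]; lra).
  destruct (rational_expansion x Hq Hx) as [b [N [P [Hb [<- HP]]]]].
  exact (reaches_01_periodic _ b N P Hb (periodic_ones_intro b N P HP)).
Qed.

(** * Density: every finite prefix extends into both basins *)

(* A right inverse of [rho_list e]: each digit [x] of [s] is produced by [1] when [x] is
   what a 1 at the current position yields, and by [01] otherwise. *)
Fixpoint rho_list_preimage (e : bool) (s : list bool) : list bool :=
  match s with
  | [] => []
  | x :: s' => if Bool.eqb x (negb e) then true :: rho_list_preimage (negb e) s'
               else false :: true :: rho_list_preimage e s'
  end.

Lemma rho_list_preimage_spec s : forall e, rho_list e (rho_list_preimage e s) = s.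
Proof.
  induction s as [| x s IH]; intro e; simpl; auto.
  destruct (Bool.eqb x (negb e)) eqn:E; simpl.
  - rewrite IH. apply Bool.eqb_prop in E. subst. reflexivity.
  - rewrite negb_involutive, IH. destruct x, e; simpl in *; auto; discriminate.
Qed.

Lemma rho_list_app l1 : forall l2 e, rho_list e (l1 ++ l2) = rho_list e l1 ++ rho_list (flip (length l1) e) l2.
Proof.
  induction l1 as [| a l1 IH]; intros l2 e; simpl; auto.
  rewrite flip_S. destruct a; simpl; rewrite IH; auto.
Qed.

Lemma rho_list_snoc_false l e : rho_list e (l ++ [false]) = rho_list e l.
Proof. rewrite rho_list_app. simpl. apply app_nil_r. Qed.

(* Every prefix [w' z'] with [w' = rho_list (rho_list w)] is attained by R^2 from some
   [w z]; a trailing 0 is appended to [z] if needed to get the right constant tail. *)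
Lemma Rmap2_prefix_preimage w z2 : exists z,
  Rmap (Rmap (bin_val (prepend (w ++ z) (const_word true)))) =
  bin_val (prepend (rho_list true (rho_list true w) ++ z2) (const_word true)).
Proof.
  set (e1 := flip (length w) true). set (e2 := flip (length (rho_list true w)) true).
  set (z1 := rho_list_preimage e1 (rho_list_preimage e2 z2)).
  assert (Ez : rho_list true (rho_list true (w ++ z1)) = rho_list true (rho_list true w) ++ z2).
  { rewrite rho_list_app. fold e1. unfold z1. rewrite rho_list_preimage_spec, rho_list_app.
    fold e2. rewrite rho_list_preimage_spec. reflexivity. }
  destruct (Bool.eqb (Nat.even (count_ones (w ++ z1))) (Nat.even (length (w ++ z1)))) eqn:Hpar.
  - exists z1. rewrite Rmap2_prepend_ones, Hpar, Ez. reflexivity.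
  - exists (z1 ++ [false]). rewrite app_assoc, Rmap2_prepend_ones, rho_list_snoc_false, Ez.
    rewrite <- (length_rho_list _ true), rho_list_snoc_false, length_rho_list, length_app.
    simpl length. rewrite Nat.add_1_r, Nat.even_succ, <- Nat.negb_even.
    destruct (Nat.even (count_ones (w ++ z1))), (Nat.even (length (w ++ z1))); simpl in *;
      congruence.
Qed.

Lemma in_orbit_Rmap2 x y : in_orbit (Rmap (Rmap x)) y -> in_orbit x y.
Proof. intros [k Hk]. exists (S (S k)). rewrite !Nat.iter_succ_r. exact Hk. Qed.

(* Every prefix [w] extends to words [w z 111...] whose orbits meet 0, and to words whose
   orbits meet 1.  Induction on the length: the empty prefix gives 1/2 -> 2/3 -> 0 and 1,
   and a nonempty one is pulled back by R^2 from the shorter [rho_list (rho_list w)]. *)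
Lemma prefix_extensions_reach w :
  (exists z, in_orbit (bin_val (prepend (w ++ z) (const_word true))) 0) /\
  (exists z, in_orbit (bin_val (prepend (w ++ z) (const_word true))) 1).
Proof.
  induction w as [w IH] using (Wf_nat.induction_ltof1 _ (@length bool)). unfold Wf_nat.ltof in IH.
  destruct w as [| a w'] eqn:Ew.
  - split.
    + exists [false]. apply in_orbit_Rmap2. rewrite Rmap2_prepend_ones. exists 0%nat.
      apply (bin_val_const false).
    + exists []. exists 0%nat. apply (bin_val_const true).
  - rewrite <- Ew in *.
    destruct (IH _ (rho_list_twice_shorter w ltac:(congruence))) as [[z0 H0] [z1 H1]].
    destruct (Rmap2_prefix_preimage w z0) as [z0' E0].
    destruct (Rmap2_prefix_preimage w z1) as [z1' E1].
    split; [exists z0' | exists z1']; apply in_orbit_Rmap2; [rewrite E0 | rewrite E1]; assumption.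
Qed.

Lemma dyadic_prefix n : forall k, (k < 2 ^ n)%nat -> exists w, length w = n /\
  forall t, bin_val (prepend w t) = (INR k + bin_val t) / 2 ^ n.
Proof.
  induction n as [| n IH]; intros k Hk.
  - exists []. split; [reflexivity |]. intro t. simpl in Hk. replace k with 0%nat by lia.
    simpl. field.
  - assert (Hp : 0 < 2 ^ n) by (apply pow_lt; lra).
    destruct (Nat.lt_ge_cases k (2 ^ n)) as [Hl | Hl].
    + destruct (IH k Hl) as [w [Hw HV]]. exists (false :: w). split; [simpl; auto |].
      intro t. simpl prepend. rewrite bin_val_cons_word, HV. unfold bit_val. simpl. field. lra.
    + assert (Hk' : (k - 2 ^ n < 2 ^ n)%nat) by (simpl in Hk; lia).
      destruct (IH _ Hk') as [w [Hw HV]]. exists (true :: w). split; [simpl; auto |].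
      intro t. simpl prepend. rewrite bin_val_cons_word, HV, minus_INR, pow_INR by lia.
      unfold bit_val. change (INR 2) with 2. change (2 ^ S n) with (2 * 2 ^ n). field. lra.
Qed.

Lemma dense_prefix_extensions (T : R -> Prop) :
  (forall w, exists z, T (bin_val (prepend (w ++ z) (const_word true)))) ->
  forall a b, 0 <= a -> a < b -> b <= 1 -> exists x, a < x < b /\ T x /\ Qset x.
Proof.
  intros HT a b Ha Hab Hb.
  destruct (pow_lt_1_zero (/2) ltac:(rewrite Rabs_pos_eq; lra) ((b - a) / 2) ltac:(lra)) as [n Hn].
  specialize (Hn n ltac:(lia)). rewrite pow_inv, Rabs_pos_eq in Hn
    by (apply Rlt_le, Rinv_0_lt_compat, pow_lt; lra).
  assert (Hh : 0 < 2 ^ n) by (apply pow_lt; lra).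
  assert (Hwide : 2 < (b - a) * 2 ^ n).
  { apply Rmult_lt_compat_r with (r := 2 ^ n) in Hn; [| exact Hh]. rewrite Rinv_l in Hn; lra. }
  destruct (archimed (a * 2 ^ n)) as [K1 K2].
  assert (HK0 : (0 <= up (a * 2 ^ n))%Z)
    by (apply le_IZR; pose proof (Rmult_le_pos a (2 ^ n) Ha ltac:(lra)); lra).
  set (k := Z.to_nat (up (a * 2 ^ n))).
  assert (Hk : INR k = IZR (up (a * 2 ^ n))) by (unfold k; rewrite INR_IZR_INZ, Znat.Z2Nat.id; auto).
  assert (Hklt : (k < 2 ^ n)%nat).
  { apply INR_lt. rewrite pow_INR. change (INR 2) with 2. rewrite Hk. nra. }
  destruct (dyadic_prefix n k Hklt) as [w [Hw HV]].
  destruct (HT w) as [z Hz]. exists (bin_val (prepend (w ++ z) (const_word true))).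
  split; [| split; [exact Hz | apply Qset_prepend_ones]].
  rewrite prepend_app, HV.
  pose proof (bin_val_pos _ (inf_ones_prepend z _ inf_ones_const)).
  pose proof (bin_val_le_1 (prepend z (const_word true))).
  rewrite Hk. split; apply (Rmult_lt_reg_r (2 ^ n)); auto; unfold Rdiv;
    rewrite Rmult_assoc, Rinv_l, Rmult_1_r by lra; nra.
Qed.

(** * The cycles C_0, C_1 and the main theorem *)

Lemma iter_after_two_cycle (f : R -> R) a b x i : f a = b -> f b = a ->
  (Nat.iter i f x = a \/ Nat.iter i f x = b) ->
  forall j, (i <= j)%nat -> Nat.iter j f x = a \/ Nat.iter j f x = b.
Proof.
  intros Ha Hb Hi j Hij. replace j with ((j - i) + i)%nat by lia. rewrite Nat.iter_add.
  induction (j - i)%nat as [| d IH]; [exact Hi |].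
  simpl. destruct IH as [-> | ->]; [right | left]; assumption.
Qed.

Lemma orbit_of_two_cycle (f : R -> R) a b x : f a = b -> f b = a -> (x = a \/ x = b) ->
  forall y, (exists k, Nat.iter k f x = y) <-> (y = a \/ y = b).
Proof.
  intros Ha Hb Hx y. split.
  - intros [k <-]. apply (iter_after_two_cycle f a b x 0 Ha Hb Hx k). lia.
  - intros Hy. destruct Hx as [-> | ->], Hy as [-> | ->];
      [exists 0%nat | exists 1%nat | exists 1%nat | exists 0%nat]; simpl; auto.
Qed.

Lemma iter_period (f : R -> R) x n : Nat.iter n f x = x -> forall j, Nat.iter (n * j) f x = x.
Proof.
  intros H j. induction j as [| j IH]; [rewrite Nat.mul_0_r; reflexivity |].
  rewrite Nat.mul_succ_r, Nat.iter_add, H. exact IH.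
Qed.

Lemma periodic_point_on_two_cycle (f : R -> R) a b x n k : f a = b -> f b = a -> (1 <= n)%nat ->
  Nat.iter n f x = x -> (Nat.iter k f x = a \/ Nat.iter k f x = b) -> x = a \/ x = b.
Proof.
  intros Ha Hb Hn Hper Hk. rewrite <- (iter_period f x n Hper k).
  apply (iter_after_two_cycle f a b x k Ha Hb Hk). nia.
Qed.

Lemma periodic_rational_orbits x n : (1 <= n)%nat -> Nat.iter n Rmap x = x ->
  Qset x ->
  (forall y, in_orbit x y <-> (y = 0 \/ y = 2/3)) \/ (forall y, in_orbit x y <-> (y = 1 \/ y = 1/3)).
Proof.
  intros Hn Hper Hq. destruct (reaches_01_rational x Hq) as [k [Hk | Hk]]; [left | right].
  - apply (orbit_of_two_cycle Rmap _ _ x Rmap_0 Rmap_2_3).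
    exact (periodic_point_on_two_cycle Rmap _ _ x n k Rmap_0 Rmap_2_3 Hn Hper (or_introl Hk)).
  - apply (orbit_of_two_cycle Rmap _ _ x Rmap_1 Rmap_1_3).
    exact (periodic_point_on_two_cycle Rmap _ _ x n k Rmap_1 Rmap_1_3 Hn Hper (or_introl Hk)).
Qed.

(* Orbits are forward invariant; in particular reaching 0 (resp. 1) means meeting
   all of C_0 (resp. C_1). *)
Lemma in_orbit_Rmap x y : in_orbit x y -> in_orbit x (Rmap y).
Proof. intros [k Hk]. exists (S k). simpl. rewrite Hk. reflexivity. Qed.

Lemma Qset0_intro x : Qset x -> in_orbit x 0 -> Qset0 x.
Proof. intros Hq H0. split; [exact Hq |]. split; [exact H0 |]. rewrite <- Rmap_0. apply in_orbit_Rmap, H0. Qed.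

Lemma Qset1_intro x : Qset x -> in_orbit x 1 -> Qset1 x.
Proof. intros Hq H1. split; [exact Hq |]. split; [exact H1 |]. rewrite <- Rmap_1. apply in_orbit_Rmap, H1. Qed.

Lemma Qset_split x : Qset x <-> (Qset0 x \/ Qset1 x).
Proof.
  split.
  - intro Hq. destruct (reaches_01_rational x Hq) as [k [Hk | Hk]];
      [left; apply Qset0_intro | right; apply Qset1_intro]; auto; exists k; exact Hk.
  - intros [[Hq _] | [Hq _]]; exact Hq.
Qed.

Lemma Qset0_Qset1_disjoint x : ~ (Qset0 x /\ Qset1 x).
Proof.
  intros [[_ [[i Hi] _]] [_ [[j Hj] _]]]. destruct (Nat.le_ge_cases i j) as [Hij | Hji].
  - destruct (iter_after_two_cycle Rmap _ _ x i Rmap_0 Rmap_2_3 (or_introl Hi) j Hij); lra.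
  - destruct (iter_after_two_cycle Rmap _ _ x j Rmap_1 Rmap_1_3 (or_introl Hj) i Hji); lra.
Qed.

Lemma Qset0_dense a b : 0 <= a -> a < b -> b <= 1 -> exists x, a < x < b /\ Qset0 x.
Proof.
  intros Ha Hab Hb.
  destruct (dense_prefix_extensions (fun x => in_orbit x 0)) with a b as [x [Hx [H0 Hq]]]; auto.
  { intro w. apply (prefix_extensions_reach w). }
  exists x. split; [exact Hx | apply Qset0_intro; assumption].
Qed.

Lemma Qset1_dense a b : 0 <= a -> a < b -> b <= 1 -> exists x, a < x < b /\ Qset1 x.
Proof.
  intros Ha Hab Hb.
  destruct (dense_prefix_extensions (fun x => in_orbit x 1)) with a b as [x [Hx [H1 Hq]]]; auto.
  { intro w. apply (prefix_extensions_reach w). }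
  exists x. split; [exact Hx | apply Qset1_intro; assumption].
Qed.

Theorem proposition6p3 :
  (* Q ∩ [0,1] is R-invariant *)
  (forall x, Qset x -> Qset (Rmap x)) /\
  (* C_0 = {0,2/3} and C_1 = {1,1/3} are periodic orbits of period 2 *)
  (Rmap 0 = 2/3 /\ Rmap (2/3) = 0 /\ Rmap 1 = 1/3 /\ Rmap (1/3) = 1) /\
  (* they are the only periodic orbits contained in Q ∩ [0,1] *)
  (forall x (n : nat), (1 <= n)%nat -> Nat.iter n Rmap x = x ->
     (forall k : nat, Qset (Nat.iter k Rmap x)) ->
     (forall y, in_orbit x y <-> (y = 0 \/ y = 2/3)) \/
     (forall y, in_orbit x y <-> (y = 1 \/ y = 1/3))) /\
  (* Q ∩ [0,1] is the disjoint union of Q_0 and Q_1 *)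
  (forall x, Qset x <-> (Qset0 x \/ Qset1 x)) /\
  (forall x, ~ (Qset0 x /\ Qset1 x)) /\
  (* both are dense in [0,1] *)
  (forall a b, 0 <= a -> a < b -> b <= 1 -> exists x, a < x < b /\ Qset0 x) /\
  (forall a b, 0 <= a -> a < b -> b <= 1 -> exists x, a < x < b /\ Qset1 x).
Proof.
  split; [exact Rmap_Qset |].
  split; [exact (conj Rmap_0 (conj Rmap_2_3 (conj Rmap_1 Rmap_1_3))) |].
  split; [intros x n Hn Hper Hall; exact (periodic_rational_orbits x n Hn Hper (Hall 0%nat)) |].
  split; [exact Qset_split |].
  split; [exact Qset0_Qset1_disjoint |].
  split; [exact Qset0_dense | exact Qset1_dense].
Qed.
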